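(* Let $n$ be an odd composite integer. Then $|S(n)| = 2$ if and only if (1) $n$ is divisible by some prime $p \equiv 3 \pmod 4$, and (2) $\gcd(p', (n/p)') = 1$ for every prime $p$ dividing $n$.
   Context: For a positive integer $m$, $m'$ denotes the odd part of $m-1$ (so $m-1 = 2^k m'$ with $m'$ odd). The set of strong liars of $n$ (with $n - 1 = 2^k n'$, $n'$ odd) is $S(n) = \{ a \bmod n : a^{n'} \equiv 1 \pmod n \text{ or } a^{2^i n'} \equiv -1 \pmod n \text{ for some } 0 \le i < k\}$. *)

From mathcomp Require Import all_boot.
Set Implicit Arguments. Unset Strict Implicit. Unset Printing Implicit Defensive.

(* odd part of m - 1: m - 1 = 2^k * m' with m' odd (for m >= 2) *)
Definition two_exp (m : nat) : nat := logn 2 m.-1.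
Definition oddpart1 (m : nat) : nat := m.-1 %/ 2 ^ two_exp m.

Definition strong_liar (n a : nat) : bool :=
  (a ^ oddpart1 n %% n == 1 %% n) ||
  [exists i : 'I_(two_exp n), (a ^ (2 ^ i * oddpart1 n) + 1) %% n == 0].

Definition S (n : nat) : {set 'I_n} := [set a : 'I_n | strong_liar n a].

From mathcomp Require Import all_boot all_algebra cyclic zify.
Import GRing.Theory.
Set Implicit Arguments. Unset Strict Implicit. Unset Printing Implicit Defensive.

(* Under condition (2), an odd prime dividing [n'] divides neither [n] nor any
   [p - 1] with [p | n], hence [gcd(n', phi n) = 1] and [a^n' = 1 (mod n)]
   forces [a = 1]. A prime [r = 3 (mod 4)] dividing [n] rules out
   [a^(2^i n') = -1] for [i > 0], since [-1] is not a square modulo [r], and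
   [a^n' = -1] means [(-a)^n' = 1], i.e. [a = -1]. So [S(n) = {1, -1}].
   Conversely, if every prime factor of [n] is [1 (mod 4)] then [4 | n - 1] and
   [-1] has a square root [x] modulo [n], which is a third strong liar since
   [x^(2n') = -1]. If an odd prime [q] divides [p'] and [(n/p)'], then [q | n'],
   and the element that is [1] modulo [n/p^e] and of order [q] modulo [p^e]
   is a third strong liar with [x^n' = 1]. *)


Lemma dvdn_addX_odd x y t : odd t -> x + y %| x ^ t + y ^ t.
Proof.
move=> t_odd; suff : (Posz (x + y) %| Posz (x ^ t + y ^ t))%Z by rewrite dvdzE.
have -> : (Posz (x ^ t + y ^ t) = x%:Z ^+ t - (- y%:Z) ^+ t)%R.
  by rewrite exprNn -signr_odd t_odd mulN1r opprK PoszD -!natz -!natrX.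
by rewrite subrXX opprK PoszD dvdz_mulr.
Qed.

Lemma dvdn_X_add1 d y t : odd t -> d %| y + 1 -> d %| y ^ t + 1.
Proof. by move=> t_odd /dvdn_trans; apply; rewrite -{2}(exp1n t) dvdn_addX_odd. Qed.

Lemma dvdn_X_add1_mod d x y t :
  x = y %[mod d] -> (d %| x ^ t + 1) = (d %| y ^ t + 1).
Proof. by move=> x_y; rewrite /dvdn -modnDml -modnXm x_y modnXm modnDml. Qed.

Lemma eqn_mod1 d u : 0 < u -> (u == 1 %[mod d]) = (d %| u.-1).
Proof. by move=> u_gt0; rewrite eqn_mod_dvd // subn1. Qed.

Lemma sqr_mod1 d y : d %| y + 1 -> y ^ 2 = 1 %[mod d].
Proof.
case: (posnP y) => [-> | y_gt0]; first by rewrite dvdn1 => /eqP ->; rewrite !modn1.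
move=> dvd_y1; apply/eqP; rewrite eqn_mod1 ?expn_gt0 ?y_gt0 //.
by rewrite -subn1 -{2}(exp1n 2) subn_sqr dvdn_mull.
Qed.

Lemma dvdn_add1_neq_mod1 d y : 2 < d -> d %| y + 1 -> y != 1 %[mod d].
Proof.
move=> d_gt2 /dvdnP[c def_y1]; apply/eqP => y_1.
suff : 2 %% d = 0 by rewrite modn_small.
by rewrite -[2]/(1 + 1) -modnDml -y_1 modnDml def_y1 modnMl.
Qed.

Lemma expn_mod1_gcdn d x a b : 0 < a ->
  x ^ a = 1 %[mod d] -> x ^ b = 1 %[mod d] -> x ^ gcdn a b = 1 %[mod d].
Proof.
move=> a_gt0 xa xb; have [c _ /dvdnP[t def_cb]] := Bezoutl b a_gt0.
have xc : x ^ (c * b) = 1 %[mod d] by rewrite mulnC expnM -modnXm xb modnXm exp1n.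
rewrite -(muln1 (x ^ _)) -modnMmr -xc modnMmr -expnD def_cb.
by rewrite mulnC expnM -modnXm xa modnXm exp1n.
Qed.

Lemma fermat_predn p y : prime p -> ~~ (p %| y) -> y ^ p.-1 = 1 %[mod p].
Proof.
move=> p_pr p_ndvd_y; rewrite -totient_prime //; apply: Euler_exp_totient.
by rewrite coprime_sym prime_coprime.
Qed.

Lemma fermat_little_expn p g j : prime p -> g ^ p ^ j = g %[mod p].
Proof.
move=> p_pr; elim: j => [|j IHj]; first by rewrite expn1.
by rewrite expnSr expnM -modnXm IHj modnXm fermat_little.
Qed.

(* The step [u = 1 mod p^(j+1) -> u^p = 1 mod p^(j+2)] holds because
   [u^p - 1 = (u - 1) (1 + u + ... + u^(p-1))] and the second factor is
   [p] modulo [p]. *)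
Lemma expn_prime_pow_mod1 p z j : prime p ->
  z = 1 %[mod p] -> z ^ p ^ j = 1 %[mod p ^ j.+1].
Proof.
move=> p_pr z_1; have p_gt1 := prime_gt1 p_pr.
have z_gt0 : 0 < z by case: z z_1 => // /esym; rewrite mod0n modn_small.
elim: j => [|j IHj]; first by rewrite expn1.
have u_gt0 : 0 < z ^ p ^ j by rewrite expn_gt0 z_gt0.
rewrite [p ^ j.+1]expnSr expnM; move: (z ^ p ^ j) u_gt0 IHj => u u_gt0.
move/eqP; rewrite eqn_mod1 // => u_1.
apply/eqP; rewrite eqn_mod1 ?expn_gt0 ?u_gt0 // predn_exp [p ^ _]expnS mulnC.
rewrite dvdn_mul // /dvdn -modn_summ.
have u_1p : u = 1 %[mod p].
  by apply/eqP; rewrite eqn_mod1 // (dvdn_trans _ u_1) // dvdn_exp.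
under eq_bigr do rewrite -modnXm u_1p modnXm exp1n.
by rewrite sum_nat_const card_ord modnMr.
Qed.

Lemma exists_nonroot_mod_prime p d : prime p -> 0 < d < p.-1 ->
  exists2 y, ~~ (p %| y) & y ^ d != 1 %[mod p].
Proof.
move=> p_pr /andP[d_gt0 d_lt].
have : ~~ all (d.-unity_root)%R (enum (predC1 (0%R : 'F_p))).
  apply: contraL d_lt => /max_unity_roots /(_ (enum_uniq _)).
  by rewrite -leqNgt -cardE cardC1 card_Fp //; apply.
case/allPn => x; rewrite mem_enum /= => x_neq0 x_nonroot.
exists x.
  apply: contra x_neq0 => /eqP x_0.
  by rewrite -[x]natr_Zp -(Fp_nat_mod p_pr) x_0.
apply: contra x_nonroot => /eqP x_d; rewrite unity_rootE.
by rewrite -(natr_Zp x) -natrX -(Fp_nat_mod p_pr) x_d Fp_nat_mod.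
Qed.

Lemma exists_root_mod_prime_power p k l j : prime p -> k %| p.-1 -> 0 < l < k ->
  exists h, h ^ k = 1 %[mod p ^ j.+1] /\ h ^ l != 1 %[mod p].
Proof.
move=> p_pr k_dvd /andP[l_gt0 l_lt]; set c := p.-1 %/ k.
have c_k : c * k = p.-1 by rewrite divnK.
have p1_gt0 : 0 < p.-1 by rewrite -subn1 subn_gt0 prime_gt1.
have k_gt0 : 0 < k by apply: leq_trans l_gt0 (ltnW l_lt).
have c_gt0 : 0 < c by rewrite divn_gt0 // dvdn_leq.
have [|y p_ndvd_y y_lc] := @exists_nonroot_mod_prime p (l * c) p_pr.
  by rewrite muln_gt0 l_gt0 c_gt0 /= -c_k mulnC ltn_pmul2l.
exists ((y ^ c) ^ p ^ j); split.
  rewrite expnAC; apply: expn_prime_pow_mod1 => //.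
  by rewrite -expnM c_k fermat_predn.
by rewrite expnAC (fermat_little_expn _ _ p_pr) -expnM mulnC.
Qed.

Lemma odd_mod4 p : odd p -> p %% 4 != 3 -> p %% 4 = 1.
Proof.
move=> p_odd; have : odd (p %% 4) by rewrite odd_mod.
by case: (p %% 4) (ltn_pmod p (isT : 0 < 4)) => [|[|[|[|]]]].
Qed.

Lemma prime_3mod4_ndvd_sqr_add1 r y : prime r -> r %% 4 = 3 -> ~~ (r %| y ^ 2 + 1).
Proof.
move=> r_pr r_3; apply/negP => r_dvd.
have r_gt2 : 2 < r by rewrite -[3]r_3 leq_mod.
have r_ndvd_y : ~~ (r %| y).
  apply/negP => r_dvd_y; have r_dvd_y2 : r %| y ^ 2 by rewrite dvdn_exp.
  by move: r_dvd; rewrite dvdn_addr // dvdn1 => /eqP r1; rewrite r1 in r_pr.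
have := fermat_predn r_pr r_ndvd_y.
have -> : r.-1 = 2 * (2 * (r %/ 4) + 1) by rewrite {1}(divn_eq r 4) r_3; lia.
rewrite expnM; apply/eqP/(dvdn_add1_neq_mod1 r_gt2)/dvdn_X_add1 => //.
by rewrite oddD oddM.
Qed.

(* An [h] with [h^4 = 1 (mod p^e)] and [h^2 <> 1 (mod p)]: the factor [h^2 - 1]
   of [h^4 - 1] is prime to [p], so [p^e] divides [h^2 + 1]. *)
Lemma exists_sqrt_neg1_mod_prime_power p j : prime p -> p %% 4 = 1 ->
  exists c, p ^ j.+1 %| c ^ 2 + 1.
Proof.
move=> p_pr p_1; have [||h [h4 h2]] := @exists_root_mod_prime_power p 4 2 j p_pr => //.
  by rewrite {1}(divn_eq p 4) p_1 addn1 dvdn_mull.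
exists h; have h_gt0 : 0 < h.
  case: h h4 {h2} => // /eqP; rewrite exp0n // mod0n eq_sym modn_small //.
  by rewrite -{1}(expn0 p) ltn_exp2l ?prime_gt1.
have h2_gt0 : 0 < h ^ 2 by rewrite expn_gt0 h_gt0.
move/eqP: h4; rewrite (_ : 4 = 2 * 2) // expnM eqn_mod_dvd;
  last by rewrite expn_gt0 h2_gt0.
rewrite -[X in _ - X](exp1n 2) subn_sqr Gauss_dvdr // coprimeXl // prime_coprime //.
by rewrite -eqn_mod_dvd.
Qed.

Lemma exists_sqrt_neg1_mod n : 0 < n ->
  (forall p, prime p -> p %| n -> p %% 4 = 1) -> exists c, n %| c ^ 2 + 1.
Proof.
elim/ltn_ind: n => n IHn n_gt0 n_1mod4.
have [n_le1 | n_gt1] := leqP n 1.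
  by exists 0; have -> : n = 1 by lia.
have p_pr := pdiv_prime n_gt1; set p := pdiv n in p_pr.
have [m p_coprime_m def_n] := pfactor_coprime p_pr n_gt0.
have : 0 < logn p n by rewrite logn_gt0 mem_primes p_pr n_gt0 pdiv_dvd.
case: (logn p n) def_n => // j def_n _.
have m_dvd_n : m %| n by rewrite def_n dvdn_mulr.
have m_gt0 : 0 < m by apply: dvdn_gt0 n_gt0 m_dvd_n.
have m_lt_n : m < n by rewrite def_n ltn_Pmulr // -{1}(expn0 p) ltn_exp2l ?prime_gt1.
have [a m_dvd_a] := IHn m m_lt_n m_gt0 (fun q q_pr q_dvd_m =>
  n_1mod4 q q_pr (dvdn_trans q_dvd_m m_dvd_n)).
have [b pj_dvd_b] :=
  exists_sqrt_neg1_mod_prime_power j p_pr (n_1mod4 p p_pr (pdiv_dvd n)).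
have pj_coprime_m : coprime (p ^ j.+1) m by rewrite coprimeXl.
exists (chinese (p ^ j.+1) m b a); rewrite def_n mulnC Gauss_dvd //.
rewrite (dvdn_X_add1_mod _ (chinese_modl _ _ _)) //.
by rewrite (dvdn_X_add1_mod _ (chinese_modr _ _ _)) ?pj_dvd_b.
Qed.

Lemma mod4_eq1_of_prime_factors n : 0 < n ->
  (forall p, prime p -> p %| n -> p %% 4 = 1) -> n %% 4 = 1.
Proof.
move=> n_gt0 n_1mod4; rewrite (prod_prime_decomp n_gt0) big_seq.
apply: (big_ind (fun m => m %% 4 = 1)) => // [a b a_1 b_1 | [p e] /= pe_in].
  by rewrite -modnMm a_1 b_1.
have [p_pr e_gt0 pe_dvd] := mem_prime_decomp pe_in.
by rewrite -modnXm (n_1mod4 p) ?exp1n // (dvdn_trans (dvdn_exp e_gt0 (dvdnn p))).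
Qed.

Lemma prime_common_divisor a b : 0 < a -> ~~ coprime a b ->
  exists q, [/\ prime q, q %| a & q %| b].
Proof.
move=> a_gt0 not_coprime; have g_gt1 : 1 < gcdn a b.
  by rewrite ltn_neqAle eq_sym not_coprime gcdn_gt0 a_gt0.
exists (pdiv (gcdn a b)); rewrite pdiv_prime //.
by split => //; apply: dvdn_trans (pdiv_dvd _) _; rewrite ?dvdn_gcdl ?dvdn_gcdr.
Qed.

Lemma predn_mul p m : 0 < p -> 0 < m -> (p * m).-1 = p * m.-1 + p.-1.
Proof. by move=> *; nia. Qed.

Lemma oddpart1_mul_two_exp m : oddpart1 m * 2 ^ two_exp m = m.-1.
Proof. by rewrite /oddpart1 /two_exp divnK // pfactor_dvdnn. Qed.

Lemma dvdn_pred_two_exp m k : 1 < m -> (2 ^ k %| m.-1) = (k <= two_exp m).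
Proof. by move=> m_gt1; rewrite pfactor_dvdn // -subn1 subn_gt0. Qed.

Lemma odd_oddpart1 m : 1 < m -> odd (oddpart1 m).
Proof.
move=> m_gt1; apply/negPn/negP; rewrite -dvdn2 => two_dvd.
have : 2 ^ (two_exp m).+1 %| m.-1.
  by rewrite -oddpart1_mul_two_exp expnS dvdn_pmul2r // expn_gt0.
by rewrite dvdn_pred_two_exp // ltnn.
Qed.

Lemma dvdn_oddpart1 q m : odd q -> (q %| oddpart1 m) = (q %| m.-1).
Proof.
by move=> q_odd; rewrite -oddpart1_mul_two_exp Gauss_dvdl // coprimeXr ?coprimen2.
Qed.

(* Since [n - 1 = p (n/p - 1) + (p - 1)], an odd prime dividing [p - 1]
   divides [n'] exactly when it divides [(n/p)']. *)
Lemma dvdn_oddpart1_quotient n p q : 0 < n -> prime p -> p %| n ->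
  prime q -> odd q -> q %| p.-1 -> (q %| oddpart1 n) = (q %| oddpart1 (n %/ p)).
Proof.
move=> n_gt0 p_pr p_dvd_n q_pr q_odd q_dvd_p1.
have p_gt0 := prime_gt0 p_pr.
have m_gt0 : 0 < n %/ p by rewrite divn_gt0 // dvdn_leq.
have q_coprime_p : coprime q p by rewrite (coprime_dvdl q_dvd_p1) // coprimePn.
rewrite !dvdn_oddpart1 // -{1}(divnK p_dvd_n) mulnC predn_mul //.
by rewrite dvdn_addl // Gauss_dvdr.
Qed.

Definition coprime_oddparts (n : nat) : Prop :=
  forall p, prime p -> p %| n -> coprime (oddpart1 p) (oddpart1 (n %/ p)).

Lemma strong_liar_mod n x : strong_liar n (x %% n) = strong_liar n x.
Proof.
rewrite /strong_liar modnXm; congr (_ || _); apply: eq_existsb => i.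
exact: (dvdn_X_add1_mod _ (modn_mod x n)).
Qed.

Lemma strong_liar1 n : strong_liar n 1.
Proof. by rewrite /strong_liar exp1n eqxx. Qed.

Lemma strong_liar_pred n : odd n -> 1 < n -> strong_liar n n.-1.
Proof.
move=> n_odd n_gt1; have two_exp_gt0 : 0 < two_exp n.
  by rewrite -dvdn_pred_two_exp // expn1 dvdn2 -subn1 oddB ?n_odd // ltnW.
apply/orP; right; apply/existsP; exists (Ordinal two_exp_gt0).
rewrite /= mul1n; apply: dvdn_X_add1 (odd_oddpart1 n_gt1) _.
by rewrite addn1 prednK // ltnW.
Qed.

Section StrongLiarCount.

Variable n : nat.
Hypotheses (n_odd : odd n) (n_gt1 : 1 < n).

Let n_gt0 : 0 < n := ltnW n_gt1.
Let n_gt2 : 2 < n := odd_gt2 n_odd n_gt1.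
Let oddpart1_odd : odd (oddpart1 n) := odd_oddpart1 n_gt1.
Let pred_lt : n.-1 < n. Proof. by rewrite ltn_predL. Qed.
Let ord1 : 'I_n := Ordinal n_gt1.
Let ordN1 : 'I_n := Ordinal pred_lt.

Let ord1_neq_ordN1 : ord1 != ordN1.
Proof. by apply/eqP => /(congr1 val) /= one_pred; move: n_gt2; rewrite one_pred; lia. Qed.

Lemma coprime_oddpart1_totient :
  coprime_oddparts n -> coprime (oddpart1 n) (totient n).
Proof.
move=> n_oddparts; apply/negPn/negP => /(prime_common_divisor (odd_gt0 oddpart1_odd)).
case=> q [q_pr q_dvd_n' q_dvd_tot].
have q_odd := dvdn_odd q_dvd_n' oddpart1_odd.
have q_coprime_n : coprime q n.
  by rewrite (coprime_dvdl (_ : q %| n.-1)) ?coprimePn // -dvdn_oddpart1.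
move: q_dvd_tot; rewrite totientE // (Euclid_dvd_prod _ _ _ q_pr) big_has.
case/hasP => p; rewrite mem_primes => /and3P[p_pr _ p_dvd_n].
rewrite (Euclid_dvdM _ _ q_pr) (Euclid_dvdX _ _ q_pr).
case/orP=> [q_dvd_p1 | /andP[q_dvd_p _]].
  have := n_oddparts p p_pr p_dvd_n; rewrite /coprime => /eqP gcd1.
  have : q %| gcdn (oddpart1 p) (oddpart1 (n %/ p)).
    rewrite dvdn_gcd dvdn_oddpart1 // q_dvd_p1 /=.
    by rewrite -(dvdn_oddpart1_quotient n_gt0 p_pr p_dvd_n q_pr q_odd q_dvd_p1).
  by rewrite gcd1 dvdn1 => /eqP q1; rewrite q1 in q_pr.
by move: q_coprime_n; rewrite prime_coprime // (dvdn_trans q_dvd_p p_dvd_n).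
Qed.

Lemma expn_oddpart1_mod1 x : coprime_oddparts n ->
  x ^ oddpart1 n = 1 %[mod n] -> x = 1 %[mod n].
Proof.
move=> n_oddparts x_n'; have n'_gt0 := odd_gt0 oddpart1_odd.
have x_coprime_n : coprime x n.
  by rewrite -(coprime_pexpl _ _ n'_gt0) -coprime_modl x_n' coprime_modl coprime1n.
have := expn_mod1_gcdn n'_gt0 x_n' (Euler_exp_totient x_coprime_n).
by rewrite (eqP (coprime_oddpart1_totient n_oddparts)) expn1.
Qed.

(* [x^(2^i n') = -1 (mod r)] with [i > 0] would make [-1] a square mod [r]. *)
Lemma two_exp_index_eq0 r x i : prime r -> r %| n -> r %% 4 = 3 ->
  n %| x ^ (2 ^ i * oddpart1 n) + 1 -> i = 0.
Proof.
move=> r_pr r_dvd_n r_3; case: i => // i /(dvdn_trans r_dvd_n).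
rewrite expnS -mulnA mulnC expnM.
by rewrite (negbTE (prime_3mod4_ndvd_sqr_add1 _ r_pr r_3)).
Qed.

Lemma strong_liar_pm1 r x : coprime_oddparts n -> prime r -> r %| n -> r %% 4 = 3 ->
  x < n -> strong_liar n x -> x = 1 \/ x = n.-1.
Proof.
move=> n_oddparts r_pr r_dvd_n r_3 x_lt_n.
case/orP => [/eqP x_n' | /existsP[i]].
  by left; move: (expn_oddpart1_mod1 n_oddparts x_n'); rewrite !modn_small.
rewrite -/(dvdn _ _) => n_dvd; right.
have i_eq0 := two_exp_index_eq0 r_pr r_dvd_n r_3 n_dvd.
move: n_dvd; rewrite i_eq0 mul1n => {i i_eq0} n_dvd.
have x_gt0 : 0 < x.
  by case: x x_lt_n n_dvd => // _; rewrite exp0n ?dvdn1 ?gtn_eqF // odd_gt0.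
have n_dvd_sum : n %| (n - x) ^ oddpart1 n + x ^ oddpart1 n.
  by apply: dvdn_trans (dvdn_addX_odd _ _ oddpart1_odd); rewrite subnK // ltnW.
have : (n - x) ^ oddpart1 n = 1 %[mod n].
  apply/eqP; rewrite eqn_mod_dvd ?expn_gt0 ?subn_gt0 ?x_lt_n //.
  by rewrite -(subnDr (x ^ oddpart1 n)) [1 + _]addnC dvdn_sub.
move/(expn_oddpart1_mod1 n_oddparts); rewrite !modn_small //; first lia.
by rewrite ltn_subrL x_gt0 n_gt0.
Qed.

Lemma card_S_eq2 r : coprime_oddparts n -> prime r -> r %| n -> r %% 4 = 3 ->
  #|S n| = 2.
Proof.
move=> n_oddparts r_pr r_dvd_n r_3.
suff -> : S n = [set ord1; ordN1] by rewrite cards2 ord1_neq_ordN1.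
apply/setP => a; rewrite !inE; apply/idP/orP => [a_liar | [] /eqP->].
- have [a1 | aN1] := strong_liar_pm1 n_oddparts r_pr r_dvd_n r_3 (ltn_ord a) a_liar.
    by left; apply/eqP/val_inj.
  by right; apply/eqP/val_inj.
- exact: strong_liar1.
- exact: strong_liar_pred.
Qed.

Lemma card_S_gt2 x : strong_liar n x -> x != 1 %[mod n] -> ~~ (n %| x + 1) ->
  2 < #|S n|.
Proof.
move=> x_liar x_neq1 x_neqN1; pose xo : 'I_n := Ordinal (ltn_pmod x n_gt0).
have : [set xo; ord1; ordN1] \subset S n.
  apply/subsetP => a; rewrite !inE -!orbA => /or3P[] /eqP->.
  - by rewrite strong_liar_mod.
  - exact: strong_liar1.
  - exact: strong_liar_pred.
move/subset_leq_card; apply: leq_trans.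
rewrite -setUA cardsU1 cards2 ord1_neq_ordN1 !inE.
have -> : xo == ord1 = false.
  by apply/negbTE; apply: contra x_neq1 => /eqP/(congr1 val) /= ->; rewrite modn_small.
have -> : xo == ordN1 = false.
  apply/negbTE; apply: contra x_neqN1 => /eqP/(congr1 val) /= x_pred.
  by rewrite /dvdn -modnDml x_pred addn1 prednK // modnn.
by [].
Qed.

Lemma card_S_gt2_of_prime_factors_1mod4 :
  (forall p, prime p -> p %| n -> p %% 4 = 1) -> 2 < #|S n|.
Proof.
move=> n_1mod4; have [x n_dvd] := exists_sqrt_neg1_mod n_gt0 n_1mod4.
have two_exp_gt1 : 1 < two_exp n.
  rewrite -dvdn_pred_two_exp // {1}(divn_eq n 4) mod4_eq1_of_prime_factors //.
  by rewrite addn1 dvdn_mull.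
have x2_neq1 : x ^ 2 != 1 %[mod n] := dvdn_add1_neq_mod1 n_gt2 n_dvd.
apply: (@card_S_gt2 x).
- apply/orP; right; apply/existsP; exists (Ordinal two_exp_gt1).
  by rewrite /= expn1 expnM; apply: dvdn_X_add1.
- by apply: contra x2_neq1 => /eqP x_1; rewrite -modnXm x_1 modnXm exp1n.
- by apply: contra x2_neq1 => /sqr_mod1/eqP.
Qed.

Lemma card_S_gt2_of_ncoprime p : prime p -> p %| n ->
  ~~ coprime (oddpart1 p) (oddpart1 (n %/ p)) -> 2 < #|S n|.
Proof.
move=> p_pr p_dvd_n.
have p'_gt0 : 0 < oddpart1 p by rewrite odd_gt0 // odd_oddpart1 ?prime_gt1.
case/(prime_common_divisor p'_gt0) => q [q_pr q_dvd_p' q_dvd_m'].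
have q_odd : odd q by rewrite (dvdn_odd q_dvd_p') // odd_oddpart1 ?prime_gt1.
have q_dvd_p1 : q %| p.-1 by rewrite -dvdn_oddpart1.
have q_dvd_n' : q %| oddpart1 n.
  by rewrite (dvdn_oddpart1_quotient n_gt0 p_pr p_dvd_n q_pr q_odd q_dvd_p1).
have [m p_coprime_m def_n] := pfactor_coprime p_pr n_gt0.
have : 0 < logn p n by rewrite logn_gt0 mem_primes p_pr n_gt0 p_dvd_n.
case: (logn p n) def_n => // j def_n _.
have [h [h_q h_neq1]] :=
  @exists_root_mod_prime_power p q 1 j p_pr q_dvd_p1 (prime_gt1 q_pr).
have pj_coprime_m : coprime (p ^ j.+1) m by rewrite coprimeXl.
pose x := chinese (p ^ j.+1) m h 1.
have x_n' : x ^ oddpart1 n = 1 %[mod n].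
  suff : x ^ oddpart1 n == 1 %[mod p ^ j.+1 * m] by rewrite mulnC -def_n => /eqP.
  rewrite chinese_remainder // -(divnK q_dvd_n') mulnC; apply/andP; split; apply/eqP.
    by rewrite -modnXm chinese_modl // modnXm expnM -modnXm h_q modnXm exp1n.
  by rewrite -modnXm chinese_modr // modnXm exp1n.
apply: (@card_S_gt2 x).
- by apply/orP; left; apply/eqP.
- apply: contra h_neq1; rewrite expn1 => /eqP x_1.
  have p_dvd_pj : p %| p ^ j.+1 by rewrite dvdn_exp.
  have x_h : x = h %[mod p].
    by rewrite -(modn_dvdm x p_dvd_pj) chinese_modl // modn_dvdm.
  by rewrite -x_h -(modn_dvdm x p_dvd_n) x_1 modn_dvdm.
- apply/negP => /(dvdn_X_add1 oddpart1_odd) n_dvd.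
  by move: (dvdn_add1_neq_mod1 n_gt2 n_dvd); rewrite x_n' eqxx.
Qed.

End StrongLiarCount.

Theorem proposition2p4 (n : nat) :
  odd n -> 1 < n -> ~~ prime n ->
  (#|S n| = 2 <->
   ((exists p, [/\ prime p, p %| n & p %% 4 = 3]) /\
    (forall p, prime p -> p %| n -> coprime (oddpart1 p) (oddpart1 (n %/ p))))).
Proof.
move=> n_odd n_gt1 _; split => [S_2 | [[r [r_pr r_dvd_n r_3]] n_oddparts]]; last first.
  exact: card_S_eq2 n_odd n_gt1 r n_oddparts r_pr r_dvd_n r_3.
split.
  have [/hasP[r] | /hasPn n_1mod4] := boolP (has (fun p => p %% 4 == 3) (primes n)).
    by rewrite mem_primes => /and3P[r_pr _ r_dvd_n] /eqP r_3; exists r.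
  suff : 2 < #|S n| by rewrite S_2.
  apply: card_S_gt2_of_prime_factors_1mod4 => // p p_pr p_dvd_n.
  apply: odd_mod4 (dvdn_odd p_dvd_n n_odd) (n_1mod4 p _).
  by rewrite mem_primes p_pr (ltnW n_gt1) p_dvd_n.
move=> p p_pr p_dvd_n; apply/negPn/negP.
by move/(card_S_gt2_of_ncoprime n_odd n_gt1 p_pr p_dvd_n); rewrite S_2.
Qed.
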